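(* Let $G$ be a $3$-colorable well-bicovered graph in which every vertex lies in a triangle. Then in every proper $3$-coloring of $G$, each color class $V_i$ has size $b(G)/2$. Further, if every edge of $G$ lies in a triangle, then for each color class $V_i$ of a proper $3$-coloring, the subgraph $G-V_i$ is well-covered.
   Context: All graphs are finite and simple; ''subgraph'' means induced subgraph. $b(G)$ denotes the maximum order of an induced bipartite subgraph of $G$. A graph is well-bicovered if every vertex-inclusion-maximal induced bipartite subgraph has the same order. A graph is well-covered if every maximal independent set has the same cardinality. *)

(* A finite simple graph is a symmetric irreflexive relation
   e : rel T on a finite type T; subgraphs are induced subgraphs. *)
From mathcomp Require Import all_boot.
Set Implicit Arguments. Unset Strict Implicit. Unset Printing Implicit Defensive.

Section Graphs.
Variables (T : finType) (e : rel T).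

Definition simple_graph := symmetric e /\ irreflexive e.

Definition independent (A : {set T}) : bool :=
  [forall x in A, forall y in A, ~~ e x y].

Definition ind_bipartite (S : {set T}) : bool :=
  [exists A : {set T}, (A \subset S) && independent A && independent (S :\: A)].

Definition bnum : nat := \max_(S : {set T} | ind_bipartite S) #|S|.

Definition maximal_bipartite (S : {set T}) : Prop :=
  ind_bipartite S /\ forall S', ind_bipartite S' -> S \subset S' -> S' = S.

Definition well_bicovered : Prop :=
  forall S1 S2, maximal_bipartite S1 -> maximal_bipartite S2 -> #|S1| = #|S2|.

Definition maximal_independent (A : {set T}) : Prop :=
  independent A /\ forall A', independent A' -> A \subset A' -> A' = A.

Definition well_covered : Prop :=
  forall A1 A2, maximal_independent A1 -> maximal_independent A2 -> #|A1| = #|A2|.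

Definition proper3 (c : T -> 'I_3) : Prop := forall x y, e x y -> c x != c y.

Definition three_colorable : Prop := exists c, proper3 c.

Definition color_class (c : T -> 'I_3) (i : 'I_3) : {set T} := [set x | c x == i].

Definition every_vertex_in_triangle : Prop :=
  forall v, exists u w, [&& e v u, e v w & e u w].

Definition every_edge_in_triangle : Prop :=
  forall u v, e u v -> exists w, e u w && e v w.

End Graphs.

(* the induced subgraph G - U on the vertex type {x | x \notin U} *)
Definition del_type (T : finType) (U : {set T}) := {x : T | x \notin U}.
Definition del_rel (T : finType) (e : rel T) (U : {set T}) : rel (del_type U) :=
  fun x y => e (val x) (val y).
Arguments del_rel {T} e U.

From mathcomp Require Import all_boot.
From mathcomp Require Import zify.
Set Implicit Arguments. Unset Strict Implicit. Unset Printing Implicit Defensive.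

(* Triangles are odd cycles, so no induced bipartite subgraph contains one.
   For a proper 3-colouring, the complement of a colour class V_k is bipartite
   (two colour classes), and it is maximal because each vertex of V_k lies in a
   triangle whose other two vertices avoid colour k.  Well-bicoveredness thus
   gives |V| - |V_k| = b(G) for every k, so the three classes have equal size
   and b(G) = 2|V_k|.  If moreover every edge lies in a triangle, then for a
   maximal independent set A of G - V_i the set V_i + A is maximal bipartite:
   a vertex v outside it has a neighbour a in A, and the third vertex of a
   triangle on va has the third colour i.  Hence |A| = b(G) - |V_i|. *)

Lemma ord3_avoid2 (a b w k : 'I_3) :
  a != b -> w != a -> w != b -> k != a -> k != b -> w = k.
Proof.
move: a b w k => [a ?] [b ?] [w ?] [k ?]; rewrite -!val_eqE /= => *.
by apply: val_inj => /=; lia.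
Qed.

Lemma sum_card_fibers (T J : finType) (f : T -> J) :
  \sum_j #|[set x | f x == j]| = #|T|.
Proof.
rewrite -sum1_card (partition_big f predT) //=; apply: eq_bigr => j _.
by rewrite sum1dep_card.
Qed.

Section Graph.
Variables (T : finType) (e : rel T).

Definition triangle (x y z : T) : bool := [&& e x y, e x z & e y z].

Lemma independentP (A : {set T}) :
  reflect {in A &, forall x y, ~~ e x y} (independent e A).
Proof.
apply: (iffP forall_inP) => [indA x y xA | indA x xA].
  exact: (forall_inP (indA x xA)).
by apply/forall_inP => y; apply: indA.
Qed.

Lemma independentS (A B : {set T}) : A \subset B -> independent e B -> independent e A.
Proof.
move=> /subsetP sAB /independentP indB.
by apply/independentP => x y /sAB xB /sAB yB; apply: indB.
Qed.

Lemma ind_bipartite0 : ind_bipartite e set0.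
Proof.
apply/existsP; exists set0; rewrite sub0set setD0 andbb.
by apply/independentP => x; rewrite inE.
Qed.

Lemma ind_bipartiteU (A B : {set T}) :
  independent e A -> independent e B -> ind_bipartite e (A :|: B).
Proof.
move=> indA indB; apply/existsP; exists A; rewrite subsetUl indA /=.
by apply: independentS indB; rewrite setDUl setDv set0U subsetDl.
Qed.

Lemma ind_bipartite_triangle (S : {set T}) x y z :
  ind_bipartite e S -> x \in S -> y \in S -> z \in S -> ~~ triangle x y z.
Proof.
case/existsP=> A /andP[/andP[_ /independentP indA] /independentP indB] xS yS zS.
have side u v : u \in S -> v \in S -> e u v -> (u \in A) != (v \in A).
  move=> uS vS; apply: contraTN => /eqP uAvA; case: (boolP (u \in A)) => uA.
    by apply: indA; rewrite -?uAvA.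
  by apply: indB; rewrite inE -?uAvA uA ?uS ?vS.
apply/and3P=> -[exy exz eyz].
move: (side _ _ xS yS exy) (side _ _ xS zS exz) (side _ _ yS zS eyz).
by case: (x \in A); case: (y \in A); case: (z \in A).
Qed.

Lemma maximal_bipartite_triangles (S : {set T}) :
  ind_bipartite e S ->
  (forall v, v \notin S -> exists u w, [/\ u \in S, w \in S & triangle v u w]) ->
  maximal_bipartite e S.
Proof.
move=> bipS tri; split=> // S' bipS' sSS'; apply/eqP; rewrite eqEsubset sSS' andbT.
apply/subsetP => v vS'; apply: contraT => vS.
have [u [w [uS wS tri_vuw]]] := tri v vS.
have := ind_bipartite_triangle bipS' vS' (subsetP sSS' u uS) (subsetP sSS' w wS).
by rewrite tri_vuw.
Qed.

Lemma card_maximal_bipartite (S : {set T}) :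
  well_bicovered e -> maximal_bipartite e S -> #|S| = bnum e.
Proof.
move=> wb maxS; rewrite /bnum (bigmax_eq_arg _ ind_bipartite0).
case: arg_maxnP => [|M bipM maxM]; first exact: ind_bipartite0.
apply: wb => //; split=> // S' bipS' sMS'.
by apply/eqP; rewrite eq_sym eqEcard sMS'; apply: maxM.
Qed.

Hypothesis sg : simple_graph e.

Lemma maximal_independent_dominating (A : {set T}) v :
  maximal_independent e A -> v \notin A -> exists2 a, a \in A & e v a.
Proof.
move=> [indA maxA] vA.
case: (boolP [exists a in A, e v a]) => [/exists_inP // | /exists_inPn noNb].
have indvA : independent e (v |: A).
  apply/independentP => x y; rewrite !in_setU1 => /predU1P[-> | xA] /predU1P[-> | yA].
  - by rewrite sg.2.
  - exact: noNb.
  - by rewrite sg.1 noNb.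
  - exact: (independentP _ indA).
by move: vA; rewrite -(maxA _ indvA (subsetUr _ _)) setU11.
Qed.

End Graph.

Section DeletedSubgraph.
Variables (T : finType) (e : rel T) (U : {set T}).

Lemma simple_graph_del : simple_graph e -> simple_graph (del_rel e U).
Proof. by move=> [sym irr]; split=> [x y | x]; [exact: sym | exact: irr]. Qed.

Lemma independent_val_imset (A : {set del_type U}) :
  independent (del_rel e U) A -> independent e (val @: A).
Proof.
move=> /independentP indA; apply/independentP => _ _ /imsetP[x xA ->] /imsetP[y yA ->].
exact: indA.
Qed.

Lemma card_setU_val_imset (A : {set del_type U}) : #|U :|: val @: A| = #|U| + #|A|.
Proof.
rewrite cardsU (card_imset _ val_inj); suff -> : U :&: val @: A = set0 by rewrite cards0 subn0.
apply/setP => x; rewrite !inE; apply/andP => -[xU /imsetP[y _ xy]].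
by move: (valP y); rewrite -xy xU.
Qed.

End DeletedSubgraph.

Section Coloring.
Variables (T : finType) (e : rel T) (c : T -> 'I_3).
Hypothesis pc : proper3 e c.

Lemma color_class_independent k : independent e (color_class c k).
Proof.
apply/independentP => x y; rewrite !inE => /eqP cx /eqP cy.
by apply/negP => /pc; rewrite cx cy eqxx.
Qed.

Lemma ind_bipartite_setC_color_class k : ind_bipartite e (~: color_class c k).
Proof.
have /card_gt0P[i] : 0 < #|[set~ k]| by rewrite cardsC1 card_ord.
rewrite !inE => ik; apply/existsP; exists (color_class c i).
rewrite color_class_independent andbT; apply/andP; split.
  by apply/subsetP => x; rewrite !inE => /eqP ->.
apply/independentP => x y; rewrite !inE => /andP[xi xk] /andP[yi yk].
by apply/negP => /pc; rewrite (ord3_avoid2 ik xi xk yi yk) eqxx.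
Qed.

Lemma maximal_bipartite_setC_color_class k :
  every_vertex_in_triangle e -> maximal_bipartite e (~: color_class c k).
Proof.
move=> tri; apply: maximal_bipartite_triangles; first exact: ind_bipartite_setC_color_class.
move=> v; rewrite !inE negbK => /eqP cv.
have [u [w /and3P[evu evw euw]]] := tri v.
by exists u, w; split; rewrite ?inE -?cv 1?eq_sym ?pc //; apply/and3P.
Qed.

Lemma maximal_bipartite_color_class_extension i (A : {set del_type (color_class c i)}) :
  simple_graph e -> every_edge_in_triangle e ->
  maximal_independent (del_rel e (color_class c i)) A ->
  maximal_bipartite e (color_class c i :|: val @: A).
Proof.
move=> sg etri maxA; apply: maximal_bipartite_triangles.
  apply: ind_bipartiteU; first exact: color_class_independent.
  exact: independent_val_imset maxA.1.
move=> v; rewrite in_setU negb_or => /andP[vU vA].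
pose v' : del_type (color_class c i) := exist _ v vU.
have v'A : v' \notin A by apply: contra vA => v'A; apply/imsetP; exists v'.
have [a aA eva] := maximal_independent_dominating (simple_graph_del _ sg) maxA v'A.
have [w /andP[evw eaw]] := etri _ _ eva.
have vi : c v != i by have := vU; rewrite inE.
have ai : c (val a) != i by have := valP a; rewrite inE.
have cw : c w = i by apply: (ord3_avoid2 (pc eva)); rewrite 1?eq_sym ?pc.
exists (val a), w; split; last by apply/and3P.
- by rewrite inE imset_f ?orbT.
- by rewrite !inE cw eqxx.
Qed.

End Coloring.

Theorem mainTheorem15 (T : finType) (e : rel T) :
  simple_graph e -> three_colorable e -> well_bicovered e ->
  every_vertex_in_triangle e ->
  (forall (c : T -> 'I_3), proper3 e c ->
     forall i : 'I_3, 2 * #|color_class c i| = bnum e) /\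
  (every_edge_in_triangle e ->
     forall (c : T -> 'I_3), proper3 e c ->
     forall i : 'I_3, well_covered (del_rel e (color_class c i))).
Proof.
move=> sg _ wb vtri; split=> [c pc i | etri c pc i A1 A2 maxA1 maxA2].
  have classC k : #|color_class c k| + bnum e = #|T|.
    have maxC := maximal_bipartite_setC_color_class pc k vtri.
    by rewrite -(card_maximal_bipartite wb maxC) cardsC.
  have := sum_card_fibers c.
  rewrite (eq_bigr (fun=> #|color_class c i|)) => [|k _]; last first.
    by apply/eqP; rewrite -(eqn_add2r (bnum e)) !classC.
  by rewrite big_const_ord /= -(classC i); lia.
have := card_maximal_bipartite wb (maximal_bipartite_color_class_extension pc sg etri maxA1).
have := card_maximal_bipartite wb (maximal_bipartite_color_class_extension pc sg etri maxA2).
by rewrite !card_setU_val_imset => <- /addnI.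
Qed.
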